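(* Let $\Gamma$, $v$, $\Lambda$ be as in the context and suppose $v_n=o(V_n)$ as $n\to\infty$. If $\Lambda$ is a $v$-perturbation of $\Gamma$ of deficiency $2$, then $\Lambda$ is not a uniqueness sequence for $H_{(\Gamma,v)}$, i.e. there is a nonzero $a\in\ell^2_v$ such that $H_{(\Gamma,v)}a$ vanishes on $\Lambda$.
   Context: $\Gamma=(\gamma_n)_{n\ge1}$ are distinct complex numbers with $\inf_n|\gamma_{n+1}|/|\gamma_n|>1$; $v=(v_n)$ positive with $\sum_nv_n/(1+|\gamma_n|^2)<\infty$. $\ell^2_v=\{(a_n):\sum|a_n|^2v_n<\infty\}$; $H_{(\Gamma,v)}a(z)=\sum_na_nv_n/(z-\gamma_n)$, $z\in\mathbb{C}\setminus\Gamma$. $V_1=1$, $V_n=\sum_{j<n}v_j$; $P_n=\sum_{j>n}v_j/|\gamma_j|^2$. $\Omega_1=\{|z|<(|\gamma_1|+|\gamma_2|)/2\}$, $\Omega_n=\{(|\gamma_{n-1}|+|\gamma_n|)/2\le|z|<(|\gamma_n|+|\gamma_{n+1}|)/2\}$ ($n\ge2$); $D_n(v;M)=\{\lambda\in\Omega_n: Mv_n/|\lambda-\gamma_n|^2\ge\max(V_n/|\lambda|^2,P_n)\}$. $\Lambda$ is a sequence of distinct nonzero complex numbers disjoint from $\Gamma$, indexed $(\lambda_n)_{n\ge n_0}$ by consecutive integers with $|\lambda_n|$ increasing. $\Lambda$ is a $v$-perturbation of $\Gamma$ if $n_0$ can be chosen so that for some sufficiently large $M$, $\lambda_n\in D_n(v;M)$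 for all but finitely many $n$; with this $n_0$, it is exact if $n_0=1$, of deficiency $n_0-1$ if $n_0>1$, of excess $1-n_0$ if $n_0<1$. *)

From Stdlib Require Import Reals.
From Coquelicot Require Import Coquelicot.

(* Conventions: all sequences are functions nat -> _, with the paper's
   1-based indices used literally (gamma 1, gamma 2, ...; the value at 0
   is irrelevant).  "sum over j >= m" of f is Series (fun k => f (m + k)). *)

Open Scope R_scope.

(* V_1 = 1, V_n = sum_{j<n} v_j (j >= 1) for n >= 2. *)
Definition Vseq (v : nat -> R) (n : nat) : R :=
  if (n <=? 1)%nat then 1 else sum_f_R0 (fun k => v (S k)) (n - 2).

Definition Pseq (gamma : nat -> C) (v : nat -> R) (n : nat) : R :=
  Series (fun k => v (n + 1 + k)%nat / (Cmod (gamma (n + 1 + k)%nat)) ^ 2).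

Definition in_Omega (gamma : nat -> C) (n : nat) (z : C) : Prop :=
  if (n <=? 1)%nat then Cmod z < (Cmod (gamma 1%nat) + Cmod (gamma 2%nat)) / 2
  else (Cmod (gamma (n - 1)%nat) + Cmod (gamma n)) / 2 <= Cmod z /\
       Cmod z < (Cmod (gamma n) + Cmod (gamma (n + 1)%nat)) / 2.

Definition in_D (gamma : nat -> C) (v : nat -> R) (M : R) (n : nat) (z : C) : Prop :=
  in_Omega gamma n z /\
  Rmax (Vseq v n / (Cmod z) ^ 2) (Pseq gamma v n)
    <= M * v n / (Cmod (z - gamma n)%C) ^ 2.

Definition in_l2v (v : nat -> R) (a : nat -> C) : Prop :=
  ex_series (fun k => (Cmod (a (S k))) ^ 2 * v (S k)).

Definition H_term (gamma : nat -> C) (v : nat -> R) (a : nat -> C) (z : C)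
  (k : nat) : C :=
  (a (S k) * RtoC (v (S k)) / (z - gamma (S k)))%C.

Definition H_vanishes_at (gamma : nat -> C) (v : nat -> R) (a : nat -> C) (z : C) : Prop :=
  is_series (H_term gamma v a z) (RtoC 0).

(* The rational functions r_N(z) = prod_(k=3..N) (z - l_k) g_k / l_k / prod_(k=1..N) (z - g_k)
   vanish at l_3, ..., l_N; since the numerator has two factors fewer than the denominator
   (deficiency 2), r_N is the sum of its simple fractions c^N_n / (z - g_n).  The relative
   perturbations |l_k - g_k| / |l_k| tend to 0 (their squares are at most M v_k / V_k), so by
   lacunarity of Gamma each residue c^N_n converges geometrically in N to some c_n, with
   |c_n| <= C |l_n - g_n| / |l_n| s^n for some s < 1 and c_1 <> 0.  Then a_n = c_n / v_n is in
   l^2_v, and H a (l_m) = lim_N r_N (l_m) = 0. *)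

From Stdlib Require Import Reals.
From Coquelicot Require Import Coquelicot.
From Stdlib Require Import Lra Lia Psatz IndefiniteDescription.
Open Scope R_scope.

Fixpoint csum (f : nat -> C) (n : nat) : C :=
  match n with O => RtoC 0 | S n => (csum f n + f n)%C end.

Fixpoint cprod (f : nat -> C) (a L : nat) : C :=
  match L with O => RtoC 1 | S L => (cprod f a L * f (a + L)%nat)%C end.

Fixpoint rprod (f : nat -> R) (a L : nat) : R :=
  match L with O => 1 | S L => rprod f a L * f (a + L)%nat end.

Lemma Cmod_sub_comm (x y : C) : Cmod (x - y) = Cmod (y - x).
Proof. rewrite <- Cmod_opp. f_equal. ring. Qed.

Lemma Cmod_triangle_rev (x y : C) : Cmod x - Cmod y <= Cmod (x - y).
Proof.
  assert (H := Cmod_triangle (x - y) y).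
  replace (x - y + y)%C with x in H by ring. lra.
Qed.

Lemma Cmod_le_1_add (h : C) : Cmod h <= 1 + Cmod (h - 1).
Proof. assert (H := Cmod_triangle_rev h 1). rewrite Cmod_1 in H. lra. Qed.

Lemma Csub_neq_0 (x y : C) : x <> y -> (x - y)%C <> RtoC 0.
Proof. intros H E. apply H. replace x with ((x - y) + y)%C by ring. rewrite E. ring. Qed.

Lemma Cinv_neq_0 (x : C) : x <> RtoC 0 -> (/ x)%C <> RtoC 0.
Proof.
  intros Hx E. assert (H := Cinv_r x Hx). rewrite E, Cmult_0_r in H.
  injection H; lra.
Qed.

Lemma RtoC_neq_0 (x : R) : x <> 0 -> RtoC x <> RtoC 0.
Proof. intros H E. injection E. exact H. Qed.

Lemma pow_le_1 (x : R) n : 0 <= x <= 1 -> x ^ n <= 1.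
Proof.
  intros Hx; induction n; simpl. lra.
  assert (0 <= x ^ n) by (apply pow_le; lra). nra.
Qed.

Lemma pow_antimono (x : R) m n : 0 <= x <= 1 -> (m <= n)%nat -> x ^ n <= x ^ m.
Proof.
  intros Hx Hmn. replace n with (m + (n - m))%nat by lia. rewrite pow_add.
  assert (0 <= x ^ m) by (apply pow_le; lra).
  assert (x ^ (n - m) <= 1) by (apply pow_le_1; lra). nra.
Qed.

Lemma pow_eventually_lt (x y : R) : 0 <= x < 1 -> 0 < y ->
  exists N, forall n, (N <= n)%nat -> x ^ n < y.
Proof.
  intros Hx Hy. destruct (pow_lt_1_zero x ltac:(rewrite Rabs_right; lra) y Hy) as [N HN].
  exists N; intros n Hn. specialize (HN n Hn).
  rewrite Rabs_right in HN; [exact HN | apply Rle_ge, pow_le; lra].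
Qed.

Lemma finite_max (f : nat -> R) (N : nat) : exists W, forall n, (n <= N)%nat -> f n <= W.
Proof.
  induction N as [|N [W HW]].
  - exists (f 0%nat); intros n Hn; replace n with 0%nat by lia; lra.
  - exists (Rmax W (f (S N))). intros n Hn.
    destruct (Nat.eq_dec n (S N)) as [->|]; [apply Rmax_r|].
    eapply Rle_trans; [apply HW; lia | apply Rmax_l].
Qed.

Lemma csum_succ_r (f : nat -> C) n : csum f (S n) = (csum f n + f n)%C.
Proof. reflexivity. Qed.

Lemma csum_ext (f g : nat -> C) n : (forall k, (k < n)%nat -> f k = g k) ->
  csum f n = csum g n.
Proof.
  induction n; simpl; intros H; [reflexivity|].
  rewrite IHn by (intros; apply H; lia). rewrite H by lia. reflexivity.
Qed.

Lemma csum_plus (f g : nat -> C) n :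
  csum (fun k => f k + g k)%C n = (csum f n + csum g n)%C.
Proof. induction n; simpl; [ring | rewrite IHn; ring]. Qed.

Lemma csum_minus (f g : nat -> C) n :
  csum (fun k => f k - g k)%C n = (csum f n - csum g n)%C.
Proof. induction n; simpl; [ring | rewrite IHn; ring]. Qed.

Lemma csum_scal (a : C) (f : nat -> C) n :
  csum (fun k => a * f k)%C n = (a * csum f n)%C.
Proof. induction n; simpl; [ring | rewrite IHn; ring]. Qed.

Lemma csum_geom_bound (f : nat -> C) (K s : R) n : 0 <= K -> 0 <= s < 1 ->
  (forall k, (k < n)%nat -> Cmod (f k) <= K * s ^ k) -> Cmod (csum f n) <= K / (1 - s).
Proof.
  intros HK Hs Hf.
  enough (Cmod (csum f n) <= K * (1 - s ^ n) / (1 - s)).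
  { assert (0 <= s ^ n) by (apply pow_le; lra).
    apply (Rle_trans _ _ _ H). apply Rmult_le_compat_r; [apply Rlt_le, Rinv_0_lt_compat; lra | nra]. }
  induction n; simpl.
  - rewrite Cmod_0. replace (K * (1 - 1) / (1 - s)) with 0 by (field; lra). lra.
  - eapply Rle_trans; [apply Cmod_triangle|].
    assert (IH := IHn ltac:(intros; apply Hf; lia)). assert (Hn := Hf n ltac:(lia)).
    replace (K * (1 - s * s ^ n) / (1 - s)) with (K * (1 - s ^ n) / (1 - s) + K * s ^ n)
      by (field; lra). lra.
Qed.

Lemma is_series_0_of_csum (f : nat -> C) :
  (forall eps, 0 < eps -> exists K0, forall K, (K0 <= K)%nat -> Cmod (csum f K) < eps) ->
  is_series f (RtoC 0).
Proof.
  intros Hf.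
  assert (Hsum : forall K, sum_n f K = csum f (S K)).
  { induction K as [|K IH]; [rewrite sum_O; simpl; ring|].
    rewrite sum_Sn, IH; reflexivity. }
  unfold is_series. apply filterlim_locally. intros eps.
  destruct (Hf eps (cond_pos eps)) as [K0 HK0]. exists K0. intros K HK.
  apply norm_compat1. rewrite Hsum. change (Cmod (csum f (S K) - 0)%C < eps).
  replace (csum f (S K) - 0)%C with (csum f (S K)) by ring. apply HK0. lia.
Qed.

Lemma cprod_eq_0 (h : nat -> C) a L j : (j < L)%nat -> h (a + j)%nat = RtoC 0 ->
  cprod h a L = RtoC 0.
Proof.
  induction L; intros Hj Hz; [lia|]. simpl.
  destruct (Nat.eq_dec j L) as [->|]; [rewrite Hz; ring|].
  rewrite IHL by (auto; lia). ring.
Qed.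

Lemma cprod_neq_0 (h : nat -> C) a L :
  (forall j, (j < L)%nat -> h (a + j)%nat <> RtoC 0) -> cprod h a L <> RtoC 0.
Proof.
  induction L; intros H; simpl.
  - intro E; injection E; lra.
  - apply Cmult_neq_0; [apply IHL; intros; apply H; lia | apply H; lia].
Qed.

Lemma cprod_ext (h k : nat -> C) a L :
  (forall j, (j < L)%nat -> h (a + j)%nat = k (a + j)%nat) -> cprod h a L = cprod k a L.
Proof.
  induction L; intros H; simpl; [reflexivity|].
  rewrite IHL by (intros; apply H; lia). rewrite H by lia. reflexivity.
Qed.

Lemma cprod_div (h k : nat -> C) a L :
  (forall j, (j < L)%nat -> k (a + j)%nat <> RtoC 0) ->
  cprod (fun i => h i / k i)%C a L = (cprod h a L / cprod k a L)%C.
Proof.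
  induction L; intros H; simpl.
  - field.
  - rewrite IHL by (intros; apply H; lia). field. split.
    + apply H; lia.
    + apply cprod_neq_0; intros; apply H; lia.
Qed.

Lemma cprod_succ_r (h : nat -> C) a L : cprod h a (S L) = (cprod h a L * h (a + L)%nat)%C.
Proof. reflexivity. Qed.

Lemma cprod_succ_l (h : nat -> C) a L : cprod h a (S L) = (h a * cprod h (S a) L)%C.
Proof.
  induction L; [simpl; rewrite Nat.add_0_r; ring|].
  change (cprod h a (S (S L))) with (cprod h a (S L) * h (a + S L)%nat)%C.
  change (cprod h (S a) (S L)) with (cprod h (S a) L * h (S a + L)%nat)%C.
  rewrite IHL. replace (a + S L)%nat with (S a + L)%nat by lia. ring.
Qed.

Lemma cprod_add (h : nat -> C) a L d :
  cprod h a (L + d) = (cprod h a L * cprod h (a + L) d)%C.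
Proof.
  induction d; [simpl; rewrite Nat.add_0_r; ring|].
  rewrite Nat.add_succ_r. simpl. rewrite IHd.
  replace (a + (L + d))%nat with (a + L + d)%nat by lia. ring.
Qed.

Lemma cprod_Cmod_le (h : nat -> C) (w : nat -> R) a L :
  (forall j, (j < L)%nat -> Cmod (h (a + j)%nat) <= w (a + j)%nat) ->
  Cmod (cprod h a L) <= rprod w a L.
Proof.
  induction L; intros H; simpl; [rewrite Cmod_1; lra|].
  rewrite Cmod_mult. apply Rmult_le_compat; try apply Cmod_ge_0.
  - apply IHL; intros; apply H; lia.
  - apply H; lia.
Qed.

Lemma rprod_geom_growth (w : nat -> R) (r : R) a : 0 < r ->
  (forall k, 0 <= w k) -> (exists K, forall k, (K <= k)%nat -> w k <= r) ->
  exists P, 0 <= P /\ forall L, rprod w a L <= P * r ^ L.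
Proof.
  intros Hr Hw [K HK].
  assert (Hrp : forall m, 0 < r ^ m) by (intros; apply pow_lt; lra).
  assert (Hw0 : forall L, 0 <= rprod w a L)
    by (induction L; simpl; [lra | apply Rmult_le_pos; auto]).
  destruct (finite_max (fun L => rprod w a L / r ^ L) K) as [W HW].
  exists (Rmax W 0). split; [apply Rmax_r|].
  assert (Hearly : forall L, (L <= K)%nat -> rprod w a L <= Rmax W 0 * r ^ L).
  { intros L HL. specialize (HW L HL). specialize (Hrp L).
    assert (rprod w a L / r ^ L <= Rmax W 0) by (eapply Rle_trans; [exact HW | apply Rmax_l]).
    apply (Rmult_le_compat_r (r ^ L)) in H; [|lra].
    unfold Rdiv in H. rewrite Rmult_assoc, Rinv_l, Rmult_1_r in H by lra. exact H. }
  induction L as [|L IH]; [apply Hearly; lia|].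
  destruct (Nat.le_gt_cases (S L) K); [apply Hearly; auto|].
  simpl. assert (w (a + L)%nat <= r) by (apply HK; lia).
  assert (0 <= Rmax W 0 * r ^ L) by (apply Rmult_le_pos; [apply Rmax_r | apply Rlt_le; auto]).
  specialize (Hw0 L). specialize (Hw (a + L)%nat). nra.
Qed.

Section GeometricProducts.

Variables (h : nat -> C) (a : nat) (K th : R).
Hypothesis HK : 0 <= K.
Hypothesis Hth : 0 <= th < 1.
Hypothesis Hh : forall j, Cmod (h (a + j)%nat - 1) <= K * th ^ j.

Lemma cprod_bounded_geom L : Cmod (cprod h a L) <= exp (K / (1 - th)).
Proof.
  enough (Cmod (cprod h a L) <= exp (K * (1 - th ^ L) / (1 - th))).
  { eapply Rle_trans; [exact H|].
    assert (0 <= K * th ^ L / (1 - th))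
      by (apply Rmult_le_pos; [apply Rmult_le_pos; [lra | apply pow_le; lra] |
                               apply Rlt_le, Rinv_0_lt_compat; lra]).
    destruct (Req_dec (K * (1 - th ^ L) / (1 - th)) (K / (1 - th))) as [E|E]; [rewrite E; lra|].
    apply Rlt_le, exp_increasing.
    replace (K / (1 - th)) with (K * (1 - th ^ L) / (1 - th) + K * th ^ L / (1 - th))
      in * by (field; lra). lra. }
  induction L; simpl.
  - rewrite Cmod_1. replace (K * (1 - 1) / (1 - th)) with 0 by (field; lra). rewrite exp_0. lra.
  - rewrite Cmod_mult.
    replace (K * (1 - th * th ^ L) / (1 - th)) with (K * (1 - th ^ L) / (1 - th) + K * th ^ L)
      by (field; lra).
    rewrite exp_plus. apply Rmult_le_compat; try apply Cmod_ge_0; [exact IHL|].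
    eapply Rle_trans; [apply Cmod_le_1_add|].
    eapply Rle_trans; [|apply exp_ineq1_le]. specialize (Hh L). lra.
Qed.

Lemma cprod_cauchy_geom L L' : (L <= L')%nat ->
  Cmod (cprod h a L' - cprod h a L) <= exp (K / (1 - th)) * K * th ^ L / (1 - th).
Proof.
  intros HL. replace L' with (L + (L' - L))%nat by lia. generalize (L' - L)%nat as d.
  set (B := exp (K / (1 - th))).
  assert (HB : 0 <= B) by (apply Rlt_le, exp_pos).
  assert (0 <= th ^ L) by (apply pow_le; lra).
  enough (forall d, Cmod (cprod h a (L + d) - cprod h a L) <= B * K * th ^ L * (1 - th ^ d) / (1 - th)).
  { intros d. eapply Rle_trans; [apply H0|].
    assert (0 <= th ^ d) by (apply pow_le; lra).
    assert (0 <= B * K * th ^ L) by (apply Rmult_le_pos; [apply Rmult_le_pos|]; lra).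
    apply Rmult_le_compat_r; [apply Rlt_le, Rinv_0_lt_compat; lra | nra]. }
  induction d.
  - rewrite Nat.add_0_r. replace (cprod h a L - cprod h a L)%C with (RtoC 0) by ring.
    rewrite Cmod_0. replace (B * K * th ^ L * (1 - th ^ 0) / (1 - th)) with 0 by (simpl; field; lra).
    lra.
  - replace (cprod h a (L + S d) - cprod h a L)%C
      with (cprod h a (L + d) * (h (a + (L + d))%nat - 1) + (cprod h a (L + d) - cprod h a L))%C
      by (rewrite Nat.add_succ_r; simpl; ring).
    eapply Rle_trans; [apply Cmod_triangle|].
    rewrite Cmod_mult.
    assert (Cmod (cprod h a (L + d)) * Cmod (h (a + (L + d))%nat - 1) <= B * (K * th ^ (L + d)))
      by (apply Rmult_le_compat; try apply Cmod_ge_0; [apply cprod_bounded_geom | apply Hh]).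
    rewrite pow_add in H0.
    replace (B * K * th ^ L * (1 - th ^ S d) / (1 - th))
      with (B * (K * (th ^ L * th ^ d)) + B * K * th ^ L * (1 - th ^ d) / (1 - th))
      by (simpl; field; lra).
    lra.
Qed.

Lemma cprod_ge_half d : K / (1 - th) <= 1 / 6 -> 1 / 2 <= Cmod (cprod h a d).
Proof.
  intros Hsmall. assert (Hc := cprod_cauchy_geom 0 d (Nat.le_0_l d)).
  simpl in Hc. rewrite Rmult_1_r in Hc.
  assert (0 <= K / (1 - th)) by (apply Rmult_le_pos; [lra | apply Rlt_le, Rinv_0_lt_compat; lra]).
  assert (exp (K / (1 - th)) <= 3).
  { eapply Rle_trans; [|apply exp_le_3].
    apply Rlt_le, exp_increasing. lra. }
  assert (exp (K / (1 - th)) * K / (1 - th) <= 1 / 2).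
  { unfold Rdiv at 1. rewrite Rmult_assoc. fold (K / (1 - th)).
    assert (0 <= exp (K / (1 - th))) by (apply Rlt_le, exp_pos). nra. }
  assert (Hr := Cmod_triangle_rev 1 (cprod h a d)).
  rewrite Cmod_1, Cmod_sub_comm in Hr. lra.
Qed.

End GeometricProducts.

Lemma Cmod_le_Rabs_sum (z : C) : Cmod z <= Rabs (fst z) + Rabs (snd z).
Proof.
  destruct z as [x y]. unfold Cmod; simpl.
  assert (0 <= Rabs x) by apply Rabs_pos. assert (0 <= Rabs y) by apply Rabs_pos.
  rewrite <- (sqrt_Rsqr (Rabs x + Rabs y)) by lra. apply sqrt_le_1_alt.
  assert (x * x = Rabs x * Rabs x) by (rewrite <- Rabs_mult, Rabs_right; nra).
  assert (y * y = Rabs y * Rabs y) by (rewrite <- Rabs_mult, Rabs_right; nra).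
  unfold Rsqr. simpl. nra.
Qed.

Lemma cauchy_geom_lim (u : nat -> C) (G th : R) : 0 <= th < 1 ->
  (forall L L', (L <= L')%nat -> Cmod (u L' - u L) <= G * th ^ L) ->
  exists p, forall L, Cmod (p - u L) <= G * th ^ L.
Proof.
  intros Hth H.
  assert (HG : 0 <= G).
  { specialize (H 0%nat 0%nat (le_n _)). replace (u 0%nat - u 0%nat)%C with (RtoC 0) in H by ring.
    rewrite Cmod_0 in H. simpl in H. lra. }
  assert (Hcoord : forall (pj : C -> R), (forall z, Rabs (pj z) <= Cmod z) ->
     (forall z w, pj (z - w)%C = pj z - pj w) -> {l : R | Un_cv (fun n => pj (u n)) l}).
  { intros pj Hpj Hlin. apply Rcomplete.R_complete. intros eps Heps.
    destruct (pow_eventually_lt th (eps / (G + 1)) Hth) as [N HN];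
      [apply Rdiv_lt_0_compat; lra|].
    assert (Hmono : forall a b, (N <= a)%nat -> (a <= b)%nat -> Rabs (pj (u b - u a)%C) < eps).
    { intros a b Ha Hb. eapply Rle_lt_trans; [apply Hpj|].
      eapply Rle_lt_trans; [apply H; auto|]. specialize (HN a Ha).
      apply (Rmult_lt_compat_l (G + 1)) in HN; [|lra].
      replace ((G + 1) * (eps / (G + 1))) with eps in HN by (field; lra).
      assert (0 <= th ^ a) by (apply pow_le; lra). nra. }
    exists N. intros n m Hn Hm. unfold R_dist. rewrite <- Hlin.
    destruct (Nat.le_ge_cases n m); [|apply Hmono; auto].
    replace (pj (u n - u m)%C) with (- pj (u m - u n)%C) by (rewrite !Hlin; ring).
    rewrite Rabs_Ropp. apply Hmono; auto. }
  destruct (Hcoord fst) as [lr Hr]; [intros z; eapply Rle_trans; [apply Rmax_l | apply Rmax_Cmod] | reflexivity |].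
  destruct (Hcoord snd) as [li Hi]; [intros z; eapply Rle_trans; [apply Rmax_r | apply Rmax_Cmod] | reflexivity |].
  exists (lr, li). intros L. apply Rle_plus_epsilon. intros eps Heps.
  destruct (Hr (eps / 2) ltac:(lra)) as [N1 HN1].
  destruct (Hi (eps / 2) ltac:(lra)) as [N2 HN2].
  set (M := Nat.max L (Nat.max N1 N2)).
  specialize (HN1 M ltac:(unfold M; lia)). specialize (HN2 M ltac:(unfold M; lia)).
  unfold R_dist in *.
  replace ((lr, li) - u L)%C with (((lr, li) - u M) + (u M - u L))%C by ring.
  eapply Rle_trans; [apply Cmod_triangle|].
  assert (Cmod (u M - u L) <= G * th ^ L) by (apply H; unfold M; lia).
  assert (Cmod ((lr, li) - u M)%C <= eps).
  { eapply Rle_trans; [apply Cmod_le_Rabs_sum|]. simpl.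
    rewrite <- (Rabs_Ropp (lr + _)), <- (Rabs_Ropp (li + _)).
    replace (- (lr + - fst (u M))) with (fst (u M) - lr) by ring.
    replace (- (li + - snd (u M))) with (snd (u M) - li) by ring. lra. }
  lra.
Qed.

Lemma cprod_limit_neq_0 (h : nat -> C) a (K th G : R) (p : C) :
  0 <= K -> 0 <= th < 1 ->
  (forall j, h (a + j)%nat <> RtoC 0) ->
  (forall j, Cmod (h (a + j)%nat - 1) <= K * th ^ j) ->
  (forall L, Cmod (p - cprod h a L) <= G * th ^ L) -> p <> RtoC 0.
Proof.
  intros HK Hth Hnz Hh Hp Ep. subst p.
  destruct (pow_eventually_lt th ((1 - th) / (6 * K + 1)) Hth) as [L0 HL0];
    [apply Rdiv_lt_0_compat; lra|].
  specialize (HL0 L0 (le_n _)). set (K0 := K * th ^ L0).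
  assert (HK0 : 0 <= K0 / (1 - th) <= 1 / 6).
  { assert (0 <= th ^ L0) by (apply pow_le; lra). unfold K0. split.
    - apply Rmult_le_pos; [apply Rmult_le_pos; lra | apply Rlt_le, Rinv_0_lt_compat; lra].
    - apply (Rmult_le_reg_r (1 - th)); [lra|]. unfold Rdiv. rewrite Rmult_assoc, Rinv_l by lra.
      apply (Rmult_lt_compat_l (6 * K + 1)) in HL0; [|lra].
      replace ((6 * K + 1) * ((1 - th) / (6 * K + 1))) with (1 - th) in HL0 by (field; lra). nra. }
  assert (Htail : forall d, 1 / 2 <= Cmod (cprod h (a + L0) d)).
  { intros d. apply (cprod_ge_half _ _ K0 th); [unfold K0; apply Rmult_le_pos; [lra | apply pow_le; lra] |
      exact Hth | | lra].
    intros j. replace (a + L0 + j)%nat with (a + (L0 + j))%nat by lia.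
    unfold K0. rewrite Rmult_assoc, <- pow_add. apply Hh. }
  set (m := Cmod (cprod h a L0)).
  assert (Hm : 0 < m) by (apply Cmod_gt_0, cprod_neq_0; intros; apply Hnz).
  destruct (pow_eventually_lt th (m / (2 * (Rabs G + 1))) Hth) as [N HN];
    [apply Rdiv_lt_0_compat; [lra | generalize (Rabs_pos G); lra]|].
  specialize (HN (L0 + N)%nat ltac:(lia)). specialize (Hp (L0 + N)%nat).
  rewrite cprod_add, Cmod_sub_comm in Hp.
  replace (cprod h a L0 * cprod h (a + L0) N - 0)%C with (cprod h a L0 * cprod h (a + L0) N)%C
    in Hp by ring.
  rewrite Cmod_mult in Hp. fold m in Hp. specialize (Htail N).
  assert (0 <= th ^ (L0 + N)) by (apply pow_le; lra).
  assert ((Rabs G + 1) * th ^ (L0 + N) < m / 2).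
  { apply (Rmult_lt_compat_l (Rabs G + 1)) in HN; [|generalize (Rabs_pos G); lra].
    replace ((Rabs G + 1) * (m / (2 * (Rabs G + 1)))) with (m / 2) in HN
      by (field; generalize (Rabs_pos G); lra). lra. }
  assert (G <= Rabs G) by apply Rle_abs. nra.
Qed.

Lemma lacunary_le (rho : nat -> R) (q : R) : 1 < q ->
  (forall n, 0 <= rho n) -> (forall n, (1 <= n)%nat -> q * rho n <= rho (S n)) ->
  forall n k, (1 <= n)%nat -> (n <= k)%nat -> rho n <= (/ q) ^ (k - n) * rho k.
Proof.
  intros Hq Hp H n k Hn Hk. replace k with (n + (k - n))%nat at 2 by lia.
  generalize (k - n)%nat as d. induction d.
  - rewrite Nat.add_0_r; simpl; lra.
  - replace (n + S d)%nat with (S (n + d)) by lia.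
    assert (rho (n + d)%nat <= / q * rho (S (n + d))).
    { specialize (H (n + d)%nat ltac:(lia)).
      apply (Rmult_le_reg_l q); [lra|]. rewrite <- Rmult_assoc, Rinv_r by lra. lra. }
    simpl. assert (0 <= (/ q) ^ d) by (apply pow_le; apply Rlt_le, Rinv_0_lt_compat; lra).
    nra.
Qed.

(* [approx_fun g l N] is r_N.  Its residue [residue g l N n] at g_n is [res_head g l n] times
   the factors [res_factor g l n k] with max n 2 < k <= N; the latter tend to 1 as k -> oo. *)
Definition res_factor (g l : nat -> C) (n k : nat) : C :=
  ((g n - l k) * g k / ((g n - g k) * l k))%C.

Definition res_head (g l : nat -> C) (n : nat) : C :=
  if (n =? 1)%nat then / (g 1%nat - g 2%nat)
  else if (n =? 2)%nat then / (g 2%nat - g 1%nat)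
  else (g n * (g n - l n) / l n * cprod (res_factor g l n) 3 (n - 3)
        / ((g n - g 1%nat) * (g n - g 2%nat)))%C.

Definition residue (g l : nat -> C) (N n : nat) : C :=
  (res_head g l n * cprod (res_factor g l n) (S (Nat.max n 2)) (N - Nat.max n 2))%C.

Definition approx_fun (g l : nat -> C) (N : nat) (z : C) : C :=
  (cprod (fun k => (z - l k) * g k / l k) 3 (N - 2) / cprod (fun k => z - g k) 1 N)%C.

Section PartialFractions.

Variables g l : nat -> C.
Hypothesis Hg_inj : forall m n, (1 <= m)%nat -> (1 <= n)%nat -> m <> n -> g m <> g n.
Hypothesis Hl_neq_0 : forall k, (3 <= k)%nat -> l k <> RtoC 0.

Lemma g_sub_neq_0 m n : (1 <= m)%nat -> (1 <= n)%nat -> m <> n -> (g m - g n)%C <> RtoC 0.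
Proof. intros; apply Csub_neq_0, Hg_inj; auto. Qed.

Lemma approx_fun_succ N w : (2 <= N)%nat ->
  approx_fun g l (S N) w =
  (cprod (fun k => (w - l k) * g k / l k) 3 (N - 2) * ((w - l (S N)) * g (S N) / l (S N))
   / (cprod (fun k => w - g k) 1 N * (w - g (S N))))%C.
Proof.
  intros HN. unfold approx_fun. replace (S N - 2)%nat with (S (N - 2)) by lia.
  rewrite !cprod_succ_r. replace (3 + (N - 2))%nat with (S N) by lia.
  replace (1 + N)%nat with (S N) by lia. reflexivity.
Qed.

Lemma residue_succ N n : (2 <= N)%nat -> (1 <= n <= N)%nat ->
  residue g l (S N) n = (residue g l N n * res_factor g l n (S N))%C.
Proof.
  intros HN Hn. unfold residue. replace (S N - Nat.max n 2)%nat with (S (N - Nat.max n 2)) by lia.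
  rewrite cprod_succ_r. replace (S (Nat.max n 2) + (N - Nat.max n 2))%nat with (S N) by lia.
  ring.
Qed.

Lemma residue_last N : (2 <= N)%nat ->
  residue g l (S N) (S N) =
  (g (S N) / l (S N) * (g (S N) - l (S N)) * approx_fun g l N (g (S N)))%C.
Proof.
  intros HN. set (g' := g (S N)). set (l' := l (S N)).
  assert (Hne : forall k, (1 <= k <= N)%nat -> (g' - g k)%C <> RtoC 0)
    by (intros; apply g_sub_neq_0; lia).
  assert (Hl' : l' <> RtoC 0) by (apply Hl_neq_0; lia).
  unfold residue, res_head. replace (Nat.max (S N) 2) with (S N) by lia.
  rewrite Nat.sub_diag.
  replace (S N =? 1)%nat with false by (symmetry; apply Nat.eqb_neq; lia).
  replace (S N =? 2)%nat with false by (symmetry; apply Nat.eqb_neq; lia).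
  replace (S N - 3)%nat with (N - 2)%nat by lia. fold g' l'. unfold approx_fun.
  rewrite (cprod_ext (res_factor g l (S N)) (fun k => (g' - l k) * g k / l k / (g' - g k))%C)
    by (intros j Hj; unfold res_factor; fold g'; field;
        split; first [apply Hne; lia | apply Hl_neq_0; lia]).
  rewrite cprod_div by (intros j Hj; apply Hne; lia).
  assert (Hsplit : cprod (fun k => g' - g k)%C 1 N =
    ((g' - g 1%nat) * ((g' - g 2%nat) * cprod (fun k => g' - g k) 3 (N - 2)))%C)
    by (replace N with (S (S (N - 2))) at 1 by lia; rewrite !cprod_succ_l; reflexivity).
  rewrite Hsplit.
  assert (cprod (fun k => g' - g k)%C 3 (N - 2) <> RtoC 0)
    by (apply cprod_neq_0; intros j Hj; apply Hne; lia).
  assert ((g' - g 1%nat)%C <> RtoC 0) by (apply Hne; lia).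
  assert ((g' - g 2%nat)%C <> RtoC 0) by (apply Hne; lia).
  simpl cprod. field. repeat split; auto.
Qed.

(* Induction on N: with h(z) = (z - l') g' / l', one has h(z) / (z - g') = g'/l' + h(g') / (z - g')
   and 1 / ((z - g_n)(z - g')) = (1 / (z - g_n) - 1 / (z - g')) / (g_n - g'), where g' = g (S N). *)
Lemma approx_fun_partial_fractions N z : (2 <= N)%nat ->
  (forall k, (1 <= k <= N)%nat -> z <> g k) ->
  approx_fun g l N z = csum (fun j => residue g l N (S j) / (z - g (S j)))%C N.
Proof.
  intros HN. revert z. replace N with (2 + (N - 2))%nat by lia. generalize (N - 2)%nat as d. clear N HN.
  induction d as [|d IHd]; intros z Hz.
  - unfold approx_fun, residue, res_head. simpl.
    assert (z - g 1%nat <> 0)%C by (apply Csub_neq_0, Hz; lia).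
    assert (z - g 2%nat <> 0)%C by (apply Csub_neq_0, Hz; lia).
    assert (g 1%nat - g 2%nat <> 0)%C by (apply g_sub_neq_0; lia).
    assert (g 2%nat - g 1%nat <> 0)%C by (apply g_sub_neq_0; lia).
    field. repeat split; auto.
  - set (N := (2 + d)%nat) in *. replace (2 + S d)%nat with (S N) by (unfold N; lia).
    set (g' := g (S N)). set (l' := l (S N)).
    assert (Hl' : l' <> RtoC 0) by (apply Hl_neq_0; unfold N; lia).
    assert (Hzg' : (z - g')%C <> RtoC 0) by (apply Csub_neq_0, Hz; unfold N; lia).
    assert (IHz := IHd z ltac:(intros; apply Hz; lia)).
    assert (IHg := IHd g' ltac:(intros; apply Hg_inj; lia)). fold N in IHz, IHg.
    rewrite approx_fun_succ by (unfold N; lia). rewrite csum_succ_r.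
    rewrite (csum_ext _ (fun j => (g' / l') * (residue g l N (S j) / (z - g (S j))) +
        ((g' / l') * (g' - l') / (z - g')) *
        (residue g l N (S j) / (z - g (S j)) - residue g l N (S j) / (g' - g (S j))))%C).
    2:{ intros j Hj. rewrite residue_succ by (unfold N in *; lia).
        unfold res_factor. fold g' l'.
        assert (z - g (S j) <> 0)%C by (apply Csub_neq_0, Hz; lia).
        assert (g (S j) - g' <> 0)%C by (apply g_sub_neq_0; unfold N in *; lia).
        assert (g' - g (S j) <> 0)%C by (apply g_sub_neq_0; unfold N in *; lia).
        field. repeat split; auto. }
    rewrite csum_plus, !csum_scal, csum_minus, <- IHz, <- IHg.
    rewrite residue_last by (unfold N; lia). fold g' l'.
    assert (cprod (fun k => z - g k)%C 1 N <> RtoC 0)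
      by (apply cprod_neq_0; intros j Hj; apply Csub_neq_0, Hz; unfold N in *; lia).
    assert (cprod (fun k => g' - g k)%C 1 N <> RtoC 0)
      by (apply cprod_neq_0; intros j Hj; apply g_sub_neq_0; unfold N in *; lia).
    unfold approx_fun. fold g'. field. repeat split; auto.
Qed.

Lemma residue_sum_vanishes m N : (3 <= m <= N)%nat ->
  (forall n, (1 <= n)%nat -> l m <> g n) ->
  csum (fun j => residue g l N (S j) / (l m - g (S j)))%C N = RtoC 0.
Proof.
  intros Hm Hlg.
  rewrite <- approx_fun_partial_fractions; [| lia | intros k Hk; apply Hlg; lia].
  unfold approx_fun. rewrite (cprod_eq_0 _ 3 _ (m - 3)) by
    (try lia; cbv beta; replace (3 + (m - 3))%nat with m by lia; unfold Cdiv; ring).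
  unfold Cdiv. ring.
Qed.

End PartialFractions.

Lemma geom_bound_of_eventually (f : nat -> R) (t : R) : 0 < t ->
  (exists W n0, forall n, (n0 <= n)%nat -> f n <= W * t ^ n) ->
  exists W, 0 <= W /\ forall n, f n <= W * t ^ n.
Proof.
  intros Ht [W [n0 HW]].
  destruct (finite_max (fun n => f n / t ^ n) n0) as [W' HW'].
  exists (Rmax (Rmax W W') 0). split; [apply Rmax_r|]. intros n.
  assert (Hp : 0 < t ^ n) by (apply pow_lt; lra).
  assert (Rmax W W' <= Rmax (Rmax W W') 0) by apply Rmax_l.
  destruct (Nat.le_gt_cases n0 n).
  - eapply Rle_trans; [apply HW; auto|].
    apply Rmult_le_compat_r; [lra|]. generalize (Rmax_l W W'); lra.
  - specialize (HW' n ltac:(lia)). cbv beta in HW'.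
    apply (Rmult_le_compat_r (t ^ n)) in HW'; [|lra].
    unfold Rdiv in HW'. rewrite Rmult_assoc, Rinv_l, Rmult_1_r in HW' by lra.
    eapply Rle_trans; [exact HW'|]. apply Rmult_le_compat_r; [lra|].
    generalize (Rmax_r W W'); lra.
Qed.

Lemma ratio_le (a d c b t th : R) : 0 <= a -> 0 <= d -> 0 < b -> 0 <= th < 1 ->
  a <= t * b -> (1 - th) * b <= c -> a * d / c <= d * t / (1 - th).
Proof.
  intros Ha Hd Hb Hth Hab Hc. assert (0 < c) by nra. assert (0 <= t) by nra.
  apply (Rmult_le_reg_r c); auto. unfold Rdiv. rewrite Rmult_assoc, Rinv_l, Rmult_1_r by lra.
  apply Rle_trans with (d * t * / (1 - th) * ((1 - th) * b)).
  - replace (d * t * / (1 - th) * ((1 - th) * b)) with (d * (t * b)) by (field; lra). nra.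
  - apply Rmult_le_compat_l; auto.
    apply Rmult_le_pos; [nra | apply Rlt_le, Rinv_0_lt_compat; lra].
Qed.

Definition rel_pert (g l : nat -> C) (k : nat) : R := Cmod (l k - g k) / Cmod (l k).

Lemma rel_pert_ge_0 g l k : 0 <= rel_pert g l k.
Proof.
  unfold rel_pert. apply Rmult_le_pos; [apply Cmod_ge_0|].
  destruct (Req_dec (Cmod (l k)) 0) as [E|E]; [rewrite E, Rinv_0; lra|].
  apply Rlt_le, Rinv_0_lt_compat. generalize (Cmod_ge_0 (l k)); lra.
Qed.

Lemma res_factor_sub_1 g l n k : g n <> g k -> l k <> RtoC 0 ->
  Cmod (res_factor g l n k - 1) = Cmod (g n) * rel_pert g l k / Cmod (g n - g k).
Proof.
  intros H1 H2. assert (Hs := Csub_neq_0 _ _ H1).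
  replace (res_factor g l n k - 1)%C with (g n * (g k - l k) / ((g n - g k) * l k))%C
    by (unfold res_factor; field; split; auto).
  rewrite Cmod_div by (apply Cmult_neq_0; auto).
  rewrite !Cmod_mult, (Cmod_sub_comm (g k)). unfold rel_pert.
  assert (0 < Cmod (l k)) by (apply Cmod_gt_0; auto).
  assert (0 < Cmod (g n - g k)) by (apply Cmod_gt_0; auto).
  field. lra.
Qed.

Lemma Cmod_res_head g l n : (3 <= n)%nat -> g n <> g 1%nat -> g n <> g 2%nat -> l n <> RtoC 0 ->
  Cmod (res_head g l n) = Cmod (g n) * rel_pert g l n * Cmod (cprod (res_factor g l n) 3 (n - 3))
                          / (Cmod (g n - g 1%nat) * Cmod (g n - g 2%nat)).
Proof.
  intros Hn H1 H2 Hl. unfold res_head.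
  replace (n =? 1)%nat with false by (symmetry; apply Nat.eqb_neq; lia).
  replace (n =? 2)%nat with false by (symmetry; apply Nat.eqb_neq; lia).
  rewrite Cmod_div by (apply Cmult_neq_0; apply Csub_neq_0; auto).
  rewrite Cmod_mult, Cmod_div, !Cmod_mult by auto.
  rewrite (Cmod_sub_comm (g n) (l n)). unfold rel_pert, Rdiv. ring.
Qed.

Section Estimates.

Variables (g l : nat -> C) (q : R).
Hypothesis Hg_inj : forall m n, (1 <= m)%nat -> (1 <= n)%nat -> m <> n -> g m <> g n.
Hypothesis Hq : 1 < q.
Hypothesis Hg_lac : forall n, (1 <= n)%nat -> q * Cmod (g n) <= Cmod (g (S n)).
Hypothesis Hl_neq_0 : forall k, (3 <= k)%nat -> l k <> RtoC 0.
Hypothesis Hl_neq_g : forall m n, (3 <= m)%nat -> (1 <= n)%nat -> l m <> g n.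
Hypothesis Hpert_small :
  forall eta, 0 < eta -> exists K, forall k, (K <= k)%nat -> rel_pert g l k <= eta.

Let th := / q.
Let s := (1 + q) / 2 * th.

Lemma th_bounds : 0 < th < 1.
Proof.
  unfold th. split; [apply Rinv_0_lt_compat; lra|].
  rewrite <- Rinv_1. apply Rinv_lt_contravar; lra.
Qed.

Lemma s_bounds : 0 < s < 1.
Proof.
  unfold s, th. split.
  - apply Rmult_lt_0_compat; [lra | apply Rinv_0_lt_compat; lra].
  - apply (Rmult_lt_reg_r q); [lra|]. rewrite Rmult_assoc, Rinv_l by lra. lra.
Qed.

Lemma Cmod_g_le n k : (1 <= n)%nat -> (n <= k)%nat ->
  Cmod (g n) <= th ^ (k - n) * Cmod (g k).
Proof. apply (lacunary_le (fun n => Cmod (g n))); auto using Cmod_ge_0. Qed.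

Lemma Cmod_g_pos n : (2 <= n)%nat -> 0 < Cmod (g n).
Proof.
  intros Hn. assert (H2 : 0 < Cmod (g 2%nat)).
  { destruct (Cmod_ge_0 (g 2%nat)) as [|E]; auto. exfalso.
    assert (H := Cmod_g_le 1 2 ltac:(lia) ltac:(lia)). rewrite <- E, Rmult_0_r in H.
    assert (E1 : Cmod (g 1%nat) = 0) by (generalize (Cmod_ge_0 (g 1%nat)); lra).
    symmetry in E. apply Cmod_eq_0 in E. apply Cmod_eq_0 in E1.
    apply (Hg_inj 1 2); try lia. congruence. }
  assert (H := Cmod_g_le 2 n ltac:(lia) Hn).
  assert (0 < th ^ (n - 2)) by (apply pow_lt, th_bounds). nra.
Qed.

Lemma Cmod_g_inv_le n : (2 <= n)%nat -> / Cmod (g n) <= th ^ n / (Cmod (g 2%nat) * th ^ 2).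
Proof.
  intros Hn. assert (H := Cmod_g_le 2 n ltac:(lia) Hn).
  assert (Hgn := Cmod_g_pos n Hn). assert (Hg2 := Cmod_g_pos 2 (le_n _)).
  assert (Hth := th_bounds). assert (0 < th ^ 2) by (apply pow_lt; lra).
  replace (th ^ n) with (th ^ (n - 2) * th ^ 2) by (rewrite <- pow_add; f_equal; lia).
  replace (th ^ (n - 2) * th ^ 2 / (Cmod (g 2%nat) * th ^ 2))
    with (th ^ (n - 2) / Cmod (g 2%nat)) by (field; split; lra).
  rewrite <- (Rmult_1_l (/ Cmod (g n))). unfold Rdiv.
  apply (Rmult_le_reg_r (Cmod (g 2%nat) * Cmod (g n))); [nra|].
  replace (1 * / Cmod (g n) * (Cmod (g 2%nat) * Cmod (g n))) with (Cmod (g 2%nat)) by (field; lra).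
  replace (th ^ (n - 2) * / Cmod (g 2%nat) * (Cmod (g 2%nat) * Cmod (g n)))
    with (th ^ (n - 2) * Cmod (g n)) by (field; lra).
  exact H.
Qed.

Lemma Cmod_g_sub_ge n k : (1 <= n)%nat -> (n < k)%nat ->
  (1 - th) * Cmod (g k) <= Cmod (g k - g n).
Proof.
  intros Hn Hk. assert (H := Cmod_g_le n k Hn ltac:(lia)).
  assert (th ^ (k - n) <= th) by (rewrite <- (pow_1 th) at 2;
    apply pow_antimono; [generalize th_bounds; lra | lia]).
  assert (Hr := Cmod_triangle_rev (g k) (g n)).
  assert (0 < Cmod (g k)) by (apply Cmod_g_pos; lia). nra.
Qed.

Lemma Cmod_g_eventually_ge (x : R) : exists n0, forall n, (n0 <= n)%nat -> x <= Cmod (g n).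
Proof.
  destruct (pow_eventually_lt th (Cmod (g 2%nat) * th ^ 2 / (Rabs x + 1))) as [N HN];
    [generalize th_bounds; lra | |].
  { apply Rdiv_lt_0_compat; [apply Rmult_lt_0_compat; [apply Cmod_g_pos; lia | apply pow_lt, th_bounds]|].
    generalize (Rabs_pos x); lra. }
  exists (Nat.max N 2). intros n Hn.
  assert (Hinv := Cmod_g_inv_le n ltac:(lia)). specialize (HN n ltac:(lia)).
  assert (0 < Cmod (g 2%nat) * th ^ 2) by (apply Rmult_lt_0_compat; [apply Cmod_g_pos; lia | apply pow_lt, th_bounds]).
  assert (Hgn := Cmod_g_pos n ltac:(lia)).
  assert (/ Cmod (g n) < / (Rabs x + 1)).
  { eapply Rle_lt_trans; [exact Hinv|]. unfold Rdiv in *.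
    apply (Rmult_lt_reg_r (Cmod (g 2%nat) * th ^ 2)); [lra|].
    rewrite Rmult_assoc, Rinv_l, Rmult_1_r by lra. nra. }
  assert (Rabs x + 1 < Cmod (g n)).
  { apply Rinv_lt_cancel; [lra | exact H0]. }
  generalize (Rle_abs x); lra.
Qed.

Lemma rel_pert_bounded : exists D, 0 <= D /\ forall k, rel_pert g l k <= D.
Proof.
  destruct (Hpert_small 1 ltac:(lra)) as [K HK].
  destruct (finite_max (rel_pert g l) K) as [W HW].
  exists (Rmax 1 W). split; [generalize (Rmax_l 1 W); lra|]. intros k.
  destruct (Nat.le_gt_cases K k).
  - eapply Rle_trans; [apply HK; auto | apply Rmax_l].
  - eapply Rle_trans; [apply HW; lia | apply Rmax_r].
Qed.

Lemma res_factor_far n k : (1 <= n)%nat -> (n < k)%nat -> (3 <= k)%nat ->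
  Cmod (res_factor g l n k - 1) <= rel_pert g l k * th ^ (k - n) / (1 - th).
Proof.
  intros Hn Hk Hk3. rewrite res_factor_sub_1 by (try apply Hg_inj; try apply Hl_neq_0; lia).
  assert (Hsub := Cmod_g_sub_ge n k Hn Hk). rewrite Cmod_sub_comm in Hsub.
  apply (ratio_le _ _ _ (Cmod (g k))); auto using Cmod_ge_0, rel_pert_ge_0.
  - apply Cmod_g_pos; lia.
  - generalize th_bounds; lra.
  - apply Cmod_g_le; lia.
Qed.

Lemma res_factor_near n k : (3 <= k)%nat -> (k < n)%nat ->
  Cmod (res_factor g l n k - 1) <= rel_pert g l k * 1 / (1 - th).
Proof.
  intros Hk Hkn. rewrite res_factor_sub_1 by (try apply Hg_inj; try apply Hl_neq_0; lia).
  apply (ratio_le _ _ _ (Cmod (g n))); auto using Cmod_ge_0, rel_pert_ge_0, Cmod_g_sub_ge.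
  - apply Cmod_g_pos; lia.
  - generalize th_bounds; lra.
  - lra.
  - apply Cmod_g_sub_ge; lia.
Qed.

Lemma tail_factor_geom : exists K, 0 <= K /\ forall n j, (1 <= n)%nat ->
  Cmod (res_factor g l n (S (Nat.max n 2) + j) - 1) <= K * th ^ j.
Proof.
  destruct rel_pert_bounded as [D [HD0 HD]]. assert (Hth := th_bounds).
  exists (D * th / (1 - th)). split.
  { apply Rmult_le_pos; [apply Rmult_le_pos | apply Rlt_le, Rinv_0_lt_compat]; lra. }
  intros n j Hn. eapply Rle_trans; [apply res_factor_far; lia|].
  assert (th ^ (S (Nat.max n 2) + j - n) <= th ^ S j) by (apply pow_antimono; lia || lra).
  assert (0 <= th ^ (S (Nat.max n 2) + j - n)) by (apply pow_le; lra).
  assert (Hd := rel_pert_ge_0 g l (S (Nat.max n 2) + j)). specialize (HD (S (Nat.max n 2) + j)%nat).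
  apply Rle_trans with (D * th ^ S j / (1 - th)).
  - unfold Rdiv. apply Rmult_le_compat_r; [apply Rlt_le, Rinv_0_lt_compat; lra|].
    apply Rmult_le_compat; lra.
  - right. simpl. field. lra.
Qed.

Lemma tail_limit : exists G (tail : nat -> C), 0 <= G /\ forall n, (1 <= n)%nat ->
  forall L, Cmod (tail n - cprod (res_factor g l n) (S (Nat.max n 2)) L) <= G * th ^ L.
Proof.
  destruct tail_factor_geom as [K [HK0 HK]]. assert (Hth := th_bounds).
  set (G := exp (K / (1 - th)) * K / (1 - th)).
  assert (HG : 0 <= G).
  { unfold G. apply Rmult_le_pos; [apply Rmult_le_pos; [apply Rlt_le, exp_pos | lra]|].
    apply Rlt_le, Rinv_0_lt_compat; lra. }
  destruct (functional_choice (fun n p => (1 <= n)%nat ->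
    forall L, Cmod (p - cprod (res_factor g l n) (S (Nat.max n 2)) L) <= G * th ^ L))
    as [tail Htail].
  { intros n. destruct (Nat.le_gt_cases 1 n) as [Hn|Hn]; [|exists (RtoC 0); lia].
    destruct (cauchy_geom_lim (cprod (res_factor g l n) (S (Nat.max n 2))) G th) as [p Hp];
      [lra | | exists p; auto].
    intros L L' HL. unfold G. replace (exp (K / (1 - th)) * K / (1 - th) * th ^ L)
      with (exp (K / (1 - th)) * K * th ^ L / (1 - th)) by (field; lra).
    apply cprod_cauchy_geom; auto; lra. }
  exists G, tail. auto.
Qed.

Lemma head_prod_growth : exists P, 0 <= P /\ forall n, (3 <= n)%nat ->
  Cmod (cprod (res_factor g l n) 3 (n - 3)) <= P * ((1 + q) / 2) ^ n.
Proof.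
  assert (Hth := th_bounds). set (w := fun k => 1 + rel_pert g l k / (1 - th)).
  assert (Hw : forall k, 0 <= w k).
  { intros k. unfold w. assert (Hd := rel_pert_ge_0 g l k).
    assert (0 <= rel_pert g l k / (1 - th)) by (apply Rmult_le_pos; [lra | apply Rlt_le, Rinv_0_lt_compat; lra]).
    lra. }
  destruct (rprod_geom_growth w ((1 + q) / 2) 3) as [P [HP0 HP]]; [lra | exact Hw | |].
  { destruct (Hpert_small ((q - 1) / 2 * (1 - th))) as [K HK]; [apply Rmult_lt_0_compat; lra|].
    exists K. intros k Hk. specialize (HK k Hk). unfold w.
    assert (rel_pert g l k / (1 - th) <= (q - 1) / 2).
    { unfold Rdiv at 1. apply (Rmult_le_reg_r (1 - th)); [lra|].
      rewrite Rmult_assoc, Rinv_l by lra. lra. }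
    lra. }
  exists P. split; [exact HP0|]. intros n Hn.
  eapply Rle_trans; [apply (cprod_Cmod_le _ w)|].
  { intros j Hj. eapply Rle_trans; [apply Cmod_le_1_add|].
    unfold w. assert (H := res_factor_near n (3 + j) ltac:(lia) ltac:(lia)).
    rewrite Rmult_1_r in H. lra. }
  eapply Rle_trans; [apply HP|]. apply Rmult_le_compat_l; [exact HP0|].
  apply Rle_pow; [lra | lia].
Qed.

Lemma res_head_bound : exists A, 0 <= A /\ forall n, (3 <= n)%nat ->
  Cmod (res_head g l n) <= rel_pert g l n * A * s ^ n.
Proof.
  destruct head_prod_growth as [P [HP0 HP]]. assert (Hth := th_bounds).
  assert (Hg2 := Cmod_g_pos 2 (le_n _)).
  assert (HB : 0 < (1 - th) ^ 2 * (Cmod (g 2%nat) * th ^ 2))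
    by (apply Rmult_lt_0_compat; [apply pow_lt; lra | apply Rmult_lt_0_compat; [lra | apply pow_lt; lra]]).
  exists (P / ((1 - th) ^ 2 * (Cmod (g 2%nat) * th ^ 2))).
  split; [apply Rmult_le_pos; [lra | apply Rlt_le, Rinv_0_lt_compat; lra]|].
  intros n Hn. rewrite Cmod_res_head by (try apply Hg_inj; try apply Hl_neq_0; lia).
  assert (Hgn := Cmod_g_pos n ltac:(lia)).
  assert (Hc1 := Cmod_g_sub_ge 1 n ltac:(lia) ltac:(lia)).
  assert (Hc2 := Cmod_g_sub_ge 2 n ltac:(lia) ltac:(lia)).
  set (X := Cmod (cprod (res_factor g l n) 3 (n - 3))).
  set (c1 := Cmod (g n - g 1%nat)) in *. set (c2 := Cmod (g n - g 2%nat)) in *.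
  assert (HX : X <= P * ((1 + q) / 2) ^ n) by (apply HP; lia).
  assert (HX0 : 0 <= X) by apply Cmod_ge_0.
  assert (Hd := rel_pert_ge_0 g l n).
  assert (Hinv := Cmod_g_inv_le n ltac:(lia)).
  assert (Hcc : (1 - th) ^ 2 * (Cmod (g n) * Cmod (g n)) <= c1 * c2).
  { assert (0 <= (1 - th) * Cmod (g n)) by nra. simpl. nra. }
  assert (Hpos : 0 < (1 - th) ^ 2 * (Cmod (g n) * Cmod (g n)))
    by (apply Rmult_lt_0_compat; [apply pow_lt; lra | nra]).
  apply Rle_trans with (rel_pert g l n * X * / Cmod (g n) / (1 - th) ^ 2).
  { replace (rel_pert g l n * X * / Cmod (g n) / (1 - th) ^ 2)
      with (Cmod (g n) * rel_pert g l n * X / ((1 - th) ^ 2 * (Cmod (g n) * Cmod (g n))))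
      by (field; lra).
    unfold Rdiv. apply Rmult_le_compat_l; [apply Rmult_le_pos; [nra | lra]|].
    apply Rinv_le_contravar; auto. }
  unfold s. rewrite Rpow_mult_distr.
  replace (rel_pert g l n * (P / ((1 - th) ^ 2 * (Cmod (g 2%nat) * th ^ 2)))
           * (((1 + q) / 2) ^ n * th ^ n))
    with (rel_pert g l n * (P * ((1 + q) / 2) ^ n) * (th ^ n / (Cmod (g 2%nat) * th ^ 2))
          / (1 - th) ^ 2) by (field; split; [lra | split; [lra | nra]]).
  unfold Rdiv. apply Rmult_le_compat_r; [apply Rlt_le, Rinv_0_lt_compat, pow_lt; lra|].
  assert (0 <= / Cmod (g n)) by (apply Rlt_le, Rinv_0_lt_compat; lra).
  apply Rmult_le_compat; [apply Rmult_le_pos; lra | lra | apply Rmult_le_compat_l; lra | exact Hinv].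
Qed.

Lemma res_head_dist_bound (z : C) : exists W, 0 <= W /\ forall n,
  Cmod (res_head g l n) / Cmod (z - g n) <= W * (s * th) ^ n.
Proof.
  destruct res_head_bound as [A [HA0 HA]]. destruct rel_pert_bounded as [D [HD0 HD]].
  assert (Hth := th_bounds). assert (Hs := s_bounds).
  apply geom_bound_of_eventually; [nra|].
  destruct (Cmod_g_eventually_ge (2 * Cmod z + 1)) as [n0 Hn0].
  assert (Hg2 := Cmod_g_pos 2 (le_n _)). assert (0 < th ^ 2) by (apply pow_lt; lra).
  exists (2 * (D * A) / (Cmod (g 2%nat) * th ^ 2)), (Nat.max n0 3). intros n Hn.
  specialize (Hn0 n ltac:(lia)). assert (Hgn := Cmod_g_pos n ltac:(lia)).
  assert (Hzn : Cmod (g n) / 2 <= Cmod (z - g n)).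
  { assert (Hr := Cmod_triangle_rev (g n) z). rewrite Cmod_sub_comm in Hr.
    generalize (Cmod_ge_0 z); lra. }
  assert (HAn : Cmod (res_head g l n) <= D * A * s ^ n).
  { eapply Rle_trans; [apply HA; lia|]. apply Rmult_le_compat_r; [apply pow_le; lra|].
    apply Rmult_le_compat_r; auto. }
  assert (Hinv := Cmod_g_inv_le n ltac:(lia)).
  assert (0 <= s ^ n) by (apply pow_le; lra).
  apply Rle_trans with (D * A * s ^ n * (2 / Cmod (g n))).
  { unfold Rdiv. apply Rmult_le_compat; [apply Cmod_ge_0 | apply Rlt_le, Rinv_0_lt_compat; lra |
      exact HAn|].
    replace (2 * / Cmod (g n)) with (/ (Cmod (g n) / 2)) by (field; lra).
    apply Rinv_le_contravar; lra. }
  rewrite Rpow_mult_distr.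
  replace (2 * (D * A) / (Cmod (g 2%nat) * th ^ 2) * (s ^ n * th ^ n))
    with (D * A * s ^ n * (2 * (th ^ n / (Cmod (g 2%nat) * th ^ 2)))) by (field; lra).
  apply Rmult_le_compat_l; [apply Rmult_le_pos; [apply Rmult_le_pos|]; lra|].
  unfold Rdiv. apply Rmult_le_compat_l; [lra | exact Hinv].
Qed.

Section Limit.

Variables (G : R) (tail : nat -> C).
Hypothesis HG : 0 <= G.
Hypothesis Htail : forall n, (1 <= n)%nat ->
  forall L, Cmod (tail n - cprod (res_factor g l n) (S (Nat.max n 2)) L) <= G * th ^ L.

Lemma limit_term_bound (z : C) (W : R) K j : 0 <= W ->
  (forall n, Cmod (res_head g l n) / Cmod (z - g n) <= W * (s * th) ^ n) ->
  (S j <= K)%nat -> (2 <= K)%nat -> z <> g (S j) ->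
  Cmod (res_head g l (S j) * tail (S j) / (z - g (S j)) - residue g l K (S j) / (z - g (S j)))
  <= W * G * th ^ (K - 1) * s ^ j.
Proof.
  intros HW0 HW Hj HK Hz. set (n := S j). assert (Hth := th_bounds). assert (Hs := s_bounds).
  set (d := Cmod (tail n - cprod (res_factor g l n) (S (Nat.max n 2)) (K - Nat.max n 2))).
  assert (Hzg : (z - g n)%C <> RtoC 0) by (apply Csub_neq_0, Hz).
  replace (res_head g l n * tail n / (z - g n) - residue g l K n / (z - g n))%C with
    (res_head g l n * (tail n - cprod (res_factor g l n) (S (Nat.max n 2)) (K - Nat.max n 2))
     / (z - g n))%C by (unfold residue; field; exact Hzg).
  rewrite Cmod_div, Cmod_mult by exact Hzg. fold d.
  assert (Hz0 : 0 < Cmod (z - g n)) by (apply Cmod_gt_0, Hzg).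
  assert (H2 : d <= G * th ^ (K - Nat.max n 2)) by (apply Htail; unfold n; lia).
  assert (Hs1 : s ^ n <= s ^ j) by (apply pow_antimono; unfold n; lia || lra).
  assert (Hs2 : th ^ n * th ^ (K - Nat.max n 2) <= th ^ (K - 1))
    by (rewrite <- pow_add; apply pow_antimono; unfold n in *; lia || lra).
  assert (0 <= s ^ n) by (apply pow_le; lra). assert (0 <= th ^ n) by (apply pow_le; lra).
  replace (Cmod (res_head g l n) * d / Cmod (z - g n))
    with (Cmod (res_head g l n) / Cmod (z - g n) * d) by (field; lra).
  apply Rle_trans with (W * (s * th) ^ n * (G * th ^ (K - Nat.max n 2))).
  { apply Rmult_le_compat; auto; [|apply Cmod_ge_0].
    apply Rmult_le_pos; [apply Cmod_ge_0 | apply Rlt_le, Rinv_0_lt_compat; auto]. }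
  rewrite Rpow_mult_distr.
  replace (W * (s ^ n * th ^ n) * (G * th ^ (K - Nat.max n 2)))
    with ((W * G) * (s ^ n * (th ^ n * th ^ (K - Nat.max n 2)))) by ring.
  replace (W * G * th ^ (K - 1) * s ^ j) with ((W * G) * (s ^ j * th ^ (K - 1))) by ring.
  apply Rmult_le_compat_l; [nra|]. apply Rmult_le_compat; auto.
  apply Rmult_le_pos; auto. apply pow_le; lra.
Qed.

(* Each partial sum of the series at l_m is compared with the partial fraction expansion
   of r_K, which vanishes at l_m once K >= m. *)
Lemma limit_series_vanishes m : (3 <= m)%nat ->
  is_series (fun j => res_head g l (S j) * tail (S j) / (l m - g (S j)))%C (RtoC 0).
Proof.
  intros Hm. set (z := l m). assert (Hth := th_bounds). assert (Hs := s_bounds).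
  destruct (res_head_dist_bound z) as [W [HW0 HW]].
  apply is_series_0_of_csum. intros eps Heps.
  destruct (pow_eventually_lt th (eps * (1 - s) / (W * G + 1))) as [N HN];
    [lra | apply Rdiv_lt_0_compat; [nra | nra] |].
  exists (Nat.max m (S N)). intros K HK.
  assert (HK0 := residue_sum_vanishes g l Hg_inj Hl_neq_0 m K ltac:(lia)
                   ltac:(intros; apply Hl_neq_g; lia)). fold z in HK0.
  replace (csum _ K) with (csum (fun j => res_head g l (S j) * tail (S j) / (z - g (S j))) K
    - csum (fun j => residue g l K (S j) / (z - g (S j))) K)%C by (rewrite HK0; ring).
  rewrite <- csum_minus.
  apply Rle_lt_trans with (W * G * th ^ (K - 1) / (1 - s)).
  { apply csum_geom_bound; [apply Rmult_le_pos; [nra | apply pow_le; lra] | lra |].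
    intros j Hj. apply limit_term_bound; [exact HW0 | exact HW | lia | lia | apply Hl_neq_g; lia]. }
  specialize (HN (K - 1)%nat ltac:(lia)).
  assert (0 <= th ^ (K - 1)) by (apply pow_le; lra).
  apply (Rmult_lt_compat_l (W * G + 1)) in HN; [|nra].
  replace ((W * G + 1) * (eps * (1 - s) / (W * G + 1))) with (eps * (1 - s)) in HN by (field; nra).
  apply (Rmult_lt_reg_r (1 - s)); [lra|].
  replace (W * G * th ^ (K - 1) / (1 - s) * (1 - s)) with (W * G * th ^ (K - 1)) by (field; lra).
  nra.
Qed.

End Limit.

Lemma vanishing_coefficients : exists c : nat -> C,
  (exists A, 0 <= A /\ forall n, (3 <= n)%nat -> Cmod (c n) <= rel_pert g l n * A * s ^ n) /\
  c 1%nat <> RtoC 0 /\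
  forall m, (3 <= m)%nat -> is_series (fun j => c (S j) / (l m - g (S j)))%C (RtoC 0).
Proof.
  destruct tail_limit as [G [tail [HG Htail]]].
  destruct res_head_bound as [A [HA0 HA]]. assert (Hth := th_bounds).
  exists (fun n => res_head g l n * tail n)%C. split; [|split].
  - exists (A * (1 + G)). split; [nra|]. intros n Hn. rewrite Cmod_mult.
    assert (Htn : Cmod (tail n) <= 1 + G).
    { specialize (Htail n ltac:(lia) 0%nat). simpl in Htail.
      eapply Rle_trans; [apply Cmod_le_1_add | lra]. }
    assert (Hd := rel_pert_ge_0 g l n). assert (0 <= s ^ n) by (apply pow_le; generalize s_bounds; lra).
    replace (rel_pert g l n * (A * (1 + G)) * s ^ n) with (rel_pert g l n * A * s ^ n * (1 + G))
      by ring.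
    apply Rmult_le_compat; [apply Cmod_ge_0 | apply Cmod_ge_0 | apply HA; lia | exact Htn].
  - apply Cmult_neq_0.
    + unfold res_head. simpl. apply Cinv_neq_0, g_sub_neq_0; auto; lia.
    + destruct tail_factor_geom as [K [HK0 HK]].
      apply (cprod_limit_neq_0 (res_factor g l 1) 3 K th G); [lra | lra | | | ].
      * intros j. unfold res_factor.
        assert (Hgk := Cmod_g_pos (3 + j) ltac:(lia)).
        repeat apply Cmult_neq_0 || apply Cinv_neq_0.
        -- apply Csub_neq_0. intros E. symmetry in E. revert E. apply Hl_neq_g; lia.
        -- intros E. rewrite E, Cmod_0 in Hgk. lra.
        -- apply g_sub_neq_0; auto; lia.
        -- apply Hl_neq_0; lia.
      * intros j. exact (HK 1%nat j (le_n _)).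
      * exact (Htail 1%nat (le_n _)).
  - intros m Hm. apply (limit_series_vanishes G tail HG Htail m Hm).
Qed.

End Estimates.

Lemma Vseq_ge_v1 (v : nat -> R) : (forall n, (1 <= n)%nat -> 0 < v n) ->
  forall n, (2 <= n)%nat -> v 1%nat <= Vseq v n.
Proof.
  intros Hv n Hn. unfold Vseq. replace (n <=? 1)%nat with false by (symmetry; apply Nat.leb_gt; lia).
  generalize (n - 2)%nat as k. induction k; simpl; [lra|].
  assert (0 < v (S (S k))) by (apply Hv; lia). lra.
Qed.

Lemma rel_pert_sq_le (gamma lambda : nat -> C) (v : nat -> R) (M : R) n :
  0 < v n -> 0 < Vseq v n -> lambda n <> RtoC 0 -> lambda n <> gamma n ->
  in_D gamma v M n (lambda n) -> rel_pert gamma lambda n ^ 2 <= M * (v n / Vseq v n).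
Proof.
  intros Hv HV Hl Hlg [_ HD].
  assert (HD' := Rle_trans _ _ _ (Rmax_l _ _) HD).
  set (a := Cmod (lambda n - gamma n)) in *. set (b := Cmod (lambda n)) in *.
  assert (Ha : 0 < a) by (apply Cmod_gt_0, Csub_neq_0; auto).
  assert (Hb : 0 < b) by (apply Cmod_gt_0; auto).
  assert (0 <= a ^ 2 / Vseq v n) by (apply Rmult_le_pos; [nra | apply Rlt_le, Rinv_0_lt_compat; lra]).
  apply (Rmult_le_compat_r (a ^ 2 / Vseq v n)) in HD'; auto.
  unfold rel_pert. fold a b.
  replace (Vseq v n / b ^ 2 * (a ^ 2 / Vseq v n)) with ((a / b) ^ 2) in HD' by (field; lra).
  replace (M * v n / a ^ 2 * (a ^ 2 / Vseq v n)) with (M * (v n / Vseq v n)) in HD' by (field; lra).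
  exact HD'.
Qed.

Lemma eventually_le_of_sq_le (x y : nat -> R) (B : R) N0 :
  (forall k, 0 <= x k) -> (forall k, (N0 <= k)%nat -> x k ^ 2 <= B * y k) ->
  is_lim_seq y 0 -> forall eta, 0 < eta -> exists K, forall k, (K <= k)%nat -> x k <= eta.
Proof.
  intros Hx Hxy Hy eta Heta. apply is_lim_seq_spec in Hy.
  set (B' := Rabs B + 1). assert (HB' : 0 < B') by (unfold B'; generalize (Rabs_pos B); lra).
  destruct (Hy (mkposreal (eta * eta / B') ltac:(apply Rdiv_lt_0_compat; nra))) as [K HK].
  exists (Nat.max K N0). intros k Hk.
  specialize (HK k ltac:(lia)). simpl in HK. rewrite Rminus_0_r in HK.
  assert (Hyk : Rabs (y k) < eta * eta / B') by exact HK.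
  apply (Rmult_lt_compat_l B') in Hyk; [|lra].
  replace (B' * (eta * eta / B')) with (eta * eta) in Hyk by (field; lra).
  assert (B * y k <= B' * Rabs (y k)).
  { unfold B'.
    apply Rle_trans with (Rabs B * Rabs (y k)); [rewrite <- Rabs_mult; apply Rle_abs|].
    generalize (Rabs_pos (y k)); nra. }
  specialize (Hxy k ltac:(lia)). specialize (Hx k). simpl in Hxy. nra.
Qed.

Lemma mul_ratio_le (M x V v1 : R) : 0 <= x -> 0 < v1 <= V -> M * (x / V) <= Rabs M / v1 * x.
Proof.
  intros Hx Hv. apply Rle_trans with (Rabs M * (x / V)).
  - apply Rmult_le_compat_r; [apply Rmult_le_pos; [lra | apply Rlt_le, Rinv_0_lt_compat; lra] |
      apply Rle_abs].
  - replace (Rabs M / v1 * x) with (Rabs M * (x / v1)) by (field; lra).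
    apply Rmult_le_compat_l; [apply Rabs_pos|]. unfold Rdiv.
    apply Rmult_le_compat_l; [lra|]. apply Rinv_le_contravar; lra.
Qed.

Lemma in_l2v_of_geom (v : nat -> R) (c : nat -> C) (d : nat -> R) (A B s : R) n0 :
  0 <= s < 1 -> (forall n, (1 <= n)%nat -> 0 < v n) ->
  (forall n, (n0 <= n)%nat -> Cmod (c n) <= d n * A * s ^ n) ->
  (forall n, (n0 <= n)%nat -> d n ^ 2 <= B * v n) ->
  in_l2v v (fun n => c n / RtoC (v n))%C.
Proof.
  intros Hs Hv Hc Hd. unfold in_l2v.
  apply (proj2 (ex_series_incr_n _ n0)).
  apply (ex_series_le (K := R_AbsRing) (V := R_CompleteNormedModule) _
           (fun k => (A ^ 2 * B * (s ^ 2) ^ S n0) * (s ^ 2) ^ k)).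
  2:{ apply (ex_series_scal_l (K := R_AbsRing) (V := R_NormedModule)).
      apply ex_series_geom. assert (0 <= s ^ 2) by (apply pow_le; lra).
      rewrite Rabs_right by lra. simpl. nra. }
  intros k. set (n := S (n0 + k)).
  assert (Hvn : 0 < v n) by (apply Hv; unfold n; lia).
  change (Rabs (Cmod (c n / RtoC (v n)) ^ 2 * v n) <= A ^ 2 * B * (s ^ 2) ^ S n0 * (s ^ 2) ^ k).
  rewrite Cmod_div by (apply RtoC_neq_0; lra). rewrite Cmod_R, (Rabs_right (v n)) by lra.
  replace ((Cmod (c n) / v n) ^ 2 * v n) with (Cmod (c n) ^ 2 / v n) by (field; lra).
  rewrite Rabs_right by (apply Rle_ge, Rmult_le_pos; [nra | apply Rlt_le, Rinv_0_lt_compat; lra]).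
  assert (E : (s ^ 2) ^ S n0 * (s ^ 2) ^ k = (s ^ n) ^ 2)
    by (rewrite <- pow_add, <- !pow_mult; f_equal; unfold n; lia).
  replace (A ^ 2 * B * (s ^ 2) ^ S n0 * (s ^ 2) ^ k)
    with (A ^ 2 * B * ((s ^ 2) ^ S n0 * (s ^ 2) ^ k)) by ring.
  rewrite E.
  assert (Hcn := Hc n ltac:(unfold n; lia)). assert (Hdn := Hd n ltac:(unfold n; lia)).
  assert (Hcn2 : Cmod (c n) ^ 2 <= (d n * A * s ^ n) ^ 2)
    by (apply pow_incr; split; [apply Cmod_ge_0 | exact Hcn]).
  apply (Rmult_le_reg_r (v n)); [lra|].
  replace (Cmod (c n) ^ 2 / v n * v n) with (Cmod (c n) ^ 2) by (field; lra).
  eapply Rle_trans; [exact Hcn2|].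
  replace ((d n * A * s ^ n) ^ 2) with (A ^ 2 * (s ^ n) ^ 2 * d n ^ 2) by ring.
  assert (0 <= A ^ 2 * (s ^ n) ^ 2) by (apply Rmult_le_pos; apply pow2_ge_0).
  replace (A ^ 2 * B * (s ^ n) ^ 2 * v n) with (A ^ 2 * (s ^ n) ^ 2 * (B * v n)) by ring.
  apply Rmult_le_compat_l; auto.
Qed.
Theorem lemma10
  (gamma : nat -> C) (v : nat -> R) (lambda : nat -> C)
  (Hdist : forall m n : nat, (1 <= m)%nat -> (1 <= n)%nat -> m <> n ->
             gamma m <> gamma n)
  (Hlac : exists q : R, 1 < q /\
            forall n : nat, (1 <= n)%nat ->
              q * Cmod (gamma n) <= Cmod (gamma (S n)))
  (Hvpos : forall n : nat, (1 <= n)%nat -> 0 < v n)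
  (Hvsum : ex_series (fun k => v (S k) / (1 + (Cmod (gamma (S k))) ^ 2)))
  (Hvo : is_lim_seq (fun n => v n / Vseq v n) 0)
  (Hldist : forall m n : nat, (3 <= m)%nat -> (3 <= n)%nat -> m <> n ->
              lambda m <> lambda n)
  (Hlnz : forall n : nat, (3 <= n)%nat -> lambda n <> RtoC 0)
  (Hldisj : forall m n : nat, (3 <= m)%nat -> (1 <= n)%nat ->
              lambda m <> gamma n)
  (Hlmon : forall n : nat, (3 <= n)%nat ->
             Cmod (lambda n) <= Cmod (lambda (S n)))
  (Hpert : exists M : R, exists N : nat, forall n : nat,
             (3 <= n)%nat -> (N <= n)%nat -> in_D gamma v M n (lambda n)) :
  exists a : nat -> C,
    in_l2v v a /\
    (exists n : nat, (1 <= n)%nat /\ a n <> RtoC 0) /\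
    (forall n : nat, (3 <= n)%nat -> H_vanishes_at gamma v a (lambda n)).
Proof.
  destruct Hlac as [q [Hq Hg_lac]]. destruct Hpert as [M [N0 HD]].
  set (n0 := Nat.max N0 3).
  assert (Hv1 : 0 < v 1%nat) by (apply Hvpos; lia).
  assert (HV : forall n, (n0 <= n)%nat -> v 1%nat <= Vseq v n)
    by (intros; apply Vseq_ge_v1; auto; lia).
  assert (Hsq : forall n, (n0 <= n)%nat ->
            rel_pert gamma lambda n ^ 2 <= M * (v n / Vseq v n)).
  { intros n Hn. specialize (HV n Hn). unfold n0 in Hn.
    apply rel_pert_sq_le; [apply Hvpos; lia | lra | apply Hlnz; lia | apply Hldisj; lia |
                           apply HD; lia]. }
  assert (Hsmall := eventually_le_of_sq_le _ _ M n0 (rel_pert_ge_0 gamma lambda) Hsq Hvo).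
  destruct (vanishing_coefficients gamma lambda q Hdist Hq Hg_lac Hlnz Hldisj Hsmall)
    as [c [[A [HA0 Hc]] [Hc1 Hvan]]].
  exists (fun n => c n / RtoC (v n))%C. split; [|split].
  - apply (in_l2v_of_geom v c (rel_pert gamma lambda) A (Rabs M / v 1%nat)
             ((1 + q) / 2 * / q) n0); auto.
    + generalize (s_bounds q Hq); lra.
    + intros n Hn. apply Hc. unfold n0 in Hn. lia.
    + intros n Hn. eapply Rle_trans; [apply Hsq; exact Hn|].
      apply mul_ratio_le; [apply Rlt_le, Hvpos; unfold n0 in Hn; lia | split; auto].
  - exists 1%nat. split; [lia|]. apply Cmult_neq_0; auto.
    apply Cinv_neq_0, RtoC_neq_0. apply Rgt_not_eq; lra.
  - intros m Hm. unfold H_vanishes_at. eapply is_series_ext; [|exact (Hvan m Hm)].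
    intros j. unfold H_term.
    assert (E : forall x y w : C, w <> RtoC 0 -> y <> RtoC 0 -> (x / y)%C = (x / w * w / y)%C)
      by (intros; field; auto).
    apply E; [apply RtoC_neq_0, Rgt_not_eq, Hvpos; lia | apply Csub_neq_0, Hldisj; lia].
Qed.
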